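(* Let $\mathcal{M}=(E,\rho)$ be a $q$-matroid with $\dim E\ge 2$. The following are equivalent: (i) $\mathcal{M}$ is irreducible; (ii) $\mathcal{M}$ is full and there do not exist nonzero subspaces $Z_1,Z_2\in\mathcal{Z}(\mathcal{M})$ such that $E=Z_1\oplus Z_2$ (i.e. $Z_1+Z_2=E$ and $Z_1\cap Z_2=0$), $\rho(Z_1)+\rho(Z_2)=\rho(E)$, and $\{Y_1\oplus Y_2\mid Y_1\in\mathcal{Z}_1,\ Y_2\in\mathcal{Z}_2\}=\mathcal{Z}(\mathcal{M})$, where $\mathcal{Z}_i=\{Z\in\mathcal{Z}(\mathcal{M})\mid Z\le Z_i\}$.
   Context: Let $\mathbb{F}=\mathbb{F}_q$. For a finite-dimensional $\mathbb{F}$-vector space $E$, $\mathcal{L}(E)$ is its subspace lattice. A $q$-matroid is $\mathcal{M}=(E,\rho)$ with $\rho:\mathcal{L}(E)\to\mathbb{Z}_{\ge0}$ satisfying $0\le\rho(V)\le\dim V$, monotonicity, and submodularity $\rho(V+W)+\rho(V\cap W)\le\rho(V)+\rho(W)$. A flat is $F$ with $\rho(F+\langle x\rangle)>\rho(F)$ for all $x\notin F$. The closure is $\mathrm{cl}(V)=\sum\{\langle x\rangle : x\in E,\ \rho(V+\langle x\rangle)=\rho(V)\}$. The cyclic core is $\mathrm{cyc}(V)=\{x\in V\mid\rho(W)=\rho(V)\text{ for all }W\le V\text{ with }W+\langle x\rangle=V\}$; $V$ is cyclic if $\mathrm{cyc}(V)=V$; $\mathcal{Z}(\mathcal{M})$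 is the set of cyclic flats. $\mathcal{M}$ is full if $\mathrm{cl}(0)=0$ and $\mathrm{cyc}(E)=E$. Direct sum: for $q$-matroids $\mathcal{M}_i=(E_i,\rho_i)$ and $E=E_1\oplus E_2$ with projections $\pi_i$, $\mathcal{M}_1\oplus\mathcal{M}_2=(E,\rho)$ with $\rho(V)=\dim V+\min_{X\le V}(\rho_1(\pi_1(X))+\rho_2(\pi_2(X))-\dim X)$; we write $\mathcal{M}=\mathcal{M}_1\oplus\mathcal{M}_2$ when $E$ is the internal direct sum of subspaces $E_1,E_2$ and the rank function of $\mathcal{M}$ equals this one. $\mathcal{M}$ is reducible if $\mathcal{M}=\mathcal{M}_1\oplus\mathcal{M}_2$ for some $q$-matroids $\mathcal{M}_1,\mathcal{M}_2$ with nonzero ground spaces, and irreducible otherwise. *)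

From HB Require Import structures.
From mathcomp Require Import all_boot all_order all_algebra all_fingroup all_field.
Set Implicit Arguments. Unset Strict Implicit. Unset Printing Implicit Defensive.
Import Order.TTheory GRing.Theory Num.Theory.
Local Open Scope ring_scope.

Section QMatroid.
Variables (F : finFieldType) (vT : vectType F).

(* A q-matroid with ground space E (a subspace of vT) and rank function rho;
   only the values of rho on subspaces of E matter. *)
Definition is_qmatroid (E : {vspace vT}) (rho : {vspace vT} -> nat) : Prop :=
  (forall V, (V <= E)%VS -> (rho V <= \dim V)%N) /\
  (forall V W, (V <= E)%VS -> (W <= E)%VS -> (V <= W)%VS -> (rho V <= rho W)%N) /\
  (forall V W, (V <= E)%VS -> (W <= E)%VS ->
     (rho (V + W)%VS + rho (V :&: W)%VS <= rho V + rho W)%N).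

Variables (E : {vspace vT}) (rho : {vspace vT} -> nat).

Definition qflat (Fl : {vspace vT}) : Prop :=
  (Fl <= E)%VS /\
  forall x, x \in E -> x \notin Fl -> (rho Fl < rho (Fl + <[x]>)%VS)%N.

Definition qcl (V : {vspace vT}) : {vspace vT} :=
  (\sum_(x : finvect_type vT | (x \in E) && (rho (V + @vline F vT x)%VS == rho V)) @vline F vT x)%VS.

Definition in_cyc (V : {vspace vT}) (x : vT) : Prop :=
  x \in V /\
  forall W, (W <= V)%VS -> (W + <[x]>)%VS = V -> rho W = rho V.

Definition qcyclic (V : {vspace vT}) : Prop := forall x, x \in V -> in_cyc V x.

Definition cyclic_flat (Z : {vspace vT}) : Prop := qflat Z /\ qcyclic Z.

Definition qfull : Prop := qcl 0%VS = 0%VS /\ qcyclic E.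

End QMatroid.

(* M = M1 (+) M2 : E is the internal direct sum of E1, E2 and for all V <= E,
   rho V = dim V + min_{X <= V} (rho1 (pi1 X) + rho2 (pi2 X) - dim X)  (in Z). *)
Definition is_direct_sum (F : finFieldType) (vT : vectType F)
    (E : {vspace vT}) (rho : {vspace vT} -> nat)
    (E1 : {vspace vT}) (rho1 : {vspace vT} -> nat)
    (E2 : {vspace vT}) (rho2 : {vspace vT} -> nat) : Prop :=
  (E1 + E2)%VS = E /\ (E1 :&: E2)%VS = 0%VS /\
  let pi1 := daddv_pi E1 E2 in
  let pi2 := daddv_pi E2 E1 in
  let val X := ((rho1 (pi1 @: X)%VS)%:Z + (rho2 (pi2 @: X)%VS)%:Z
                - (\dim X)%:Z)%R in
  forall V, (V <= E)%VS ->
    (exists2 X, (X <= V)%VS & (rho V)%:Z = ((\dim V)%:Z + val X)%R) /\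
    (forall X, (X <= V)%VS -> ((rho V)%:Z <= (\dim V)%:Z + val X)%R).

Definition qreducible (F : finFieldType) (vT : vectType F)
    (E : {vspace vT}) (rho : {vspace vT} -> nat) : Prop :=
  exists E1 E2 : {vspace vT}, exists rho1 rho2 : {vspace vT} -> nat,
    E1 != 0%VS /\ E2 != 0%VS /\
    is_qmatroid E1 rho1 /\ is_qmatroid E2 rho2 /\
    is_direct_sum E rho E1 rho1 E2 rho2.

Definition qirreducible (F : finFieldType) (vT : vectType F)
    (E : {vspace vT}) (rho : {vspace vT} -> nat) : Prop :=
  ~ qreducible E rho.

From HB Require Import structures.
From mathcomp Require Import all_boot all_order all_algebra all_fingroup all_field.
From mathcomp Require Import zify.
From Stdlib Require Import Classical.
Import Order.TTheory GRing.Theory Num.Theory.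

Set Implicit Arguments. Unset Strict Implicit. Unset Printing Implicit Defensive.

(* Every rank is witnessed by a cyclic flat: rho V = rho Z + dim (V + Z) - dim Z for some
   cyclic flat Z.  A loop, or a hyperplane of smaller rank, splits off as a one-dimensional
   direct summand, so an irreducible q-matroid is full; a decomposition E = Z1 (+) Z2 of the
   cyclic flats with rho Z1 + rho Z2 = rho E makes the projections onto Z1 and Z2 lose no
   rank, which is again a direct sum.  Conversely, in a full direct sum M1 (+) M2 the rank
   is additive across E1 and E2 and every cyclic flat is the sum of its two projections,
   each again a cyclic flat, so E1 and E2 decompose the cyclic flats. *)

(* zify turns every subspace inclusion in the context into a boolean atom, on which lia
   then case-splits exponentially. *)
Ltac rank_lia := repeat match goal with H : is_true (subsetv _ _) |- _ => clear H end; lia.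

Section Subspaces.
Variables (K : fieldType) (vT : vectType K).
Implicit Types (A B C P W Y : {vspace vT}) (x : vT).

Lemma capv_line_eq0 P x : x \notin P -> (P :&: <[x]> = 0)%VS.
Proof.
move=> xP; apply/eqP; rewrite -subv0; apply/subvP => v /memv_capP[vP /vlineP[k vk]].
rewrite memv0; apply/eqP; move: vP; rewrite vk.
have [->|k0] := eqVneq k 0%R; first by rewrite scale0r.
by move=> /(memvZ k^-1); rewrite scalerA mulVf // scale1r (negbTE xP).
Qed.

Lemma dimv_add_line P x : x \notin P -> \dim (P + <[x]>) = (\dim P).+1.
Proof.
move=> xP; have x0 : x != 0%R by apply: contraNneq xP => ->; rewrite mem0v.
by rewrite dimv_disjoint_sum ?capv_line_eq0 // dim_vline x0 addn1.
Qed.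

Lemma dimv_add_line_leq P x : \dim (P + <[x]>) <= (\dim P).+1.
Proof.
apply: leq_trans (dimv_add_leqif _ _) _.
by rewrite dim_vline -addn1 leq_add2l leq_b1.
Qed.

Lemma capv_addv_modular A B C : (A <= C)%VS -> ((A + B) :&: C = A + (B :&: C))%VS.
Proof.
move=> AC; apply/eqP; rewrite eqEsubv; apply/andP; split; apply/subvP => v.
  move=> /memv_capP[/memv_addP[a aA [b bB ->]] abC]; apply: memv_add => //.
  rewrite memv_cap bB -[b](addKr a) memvD // memvN (subvP AC) //.
move=> /memv_addP[a aA [b /memv_capP[bB bC] ->]].
by rewrite memv_cap memv_add // memvD // (subvP AC).
Qed.

Lemma exists_hyperplane P Y : (P <= Y)%VS -> P != Y ->
  exists x W, [/\ x \in Y, (P <= W)%VS, (W + <[x]> = Y)%VS & (\dim W).+1 = \dim Y].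
Proof.
move=> PY PnY; have /subvPn[x xY xP] : ~~ (Y <= P)%VS.
  by apply: contra PnY => YP; rewrite eqEsubv PY YP.
set S := (P + <[x]>)%VS; have SY : (S <= Y)%VS by rewrite subv_add PY -memvE.
have eY : (P + (Y :\: S) + <[x]> = Y)%VS.
  by rewrite (addvC P) -addvA -/S addv_diff (addv_idPl SY).
exists x, (P + (Y :\: S))%VS; split => //; first exact: addvSl.
set W := (P + (Y :\: S))%VS in eY *; apply/eqP; rewrite eqn_leq -{2}eY dimv_add_line_leq andbT.
have := dimv_cap_compl Y S; rewrite (capv_idPr SY) dimv_add_line // => <-.
by rewrite addSn ltnS (dimv_add_leqif _ _).
Qed.
End Subspaces.

Section Projections.
Variables (K : fieldType) (vT : vectType K) (U V : {vspace vT}).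
Implicit Types (A B X : {vspace vT}) (y : vT).
Hypothesis dUV : (U :&: V = 0)%VS.

Local Notation pi := (daddv_pi U V).

Lemma limg_daddv_pi_sub X : (pi @: X <= U)%VS.
Proof. by apply/subvP => _ /memv_imgP[x _ ->]; apply: memv_pi. Qed.

Lemma daddv_pi_eq0 b : b \in V -> pi b = 0%R.
Proof.
move=> bV; have := daddv_pi_add dUV (memv_add (mem0v U) bV).
have dVU : (V :&: U = 0)%VS by rewrite capvC.
rewrite add0r (daddv_pi_id dVU bV) => /(congr1 (fun y => (y - b)%R)).
by rewrite addrK subrr.
Qed.

Lemma limg_daddv_pi_id A : (A <= U)%VS -> (pi @: A = A)%VS.
Proof.
move=> AU; apply/vspaceP => a; apply/memv_imgP/idP => [[u uA ->]|aA]; last first.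
  by exists a; rewrite ?daddv_pi_id ?(subvP AU).
by rewrite daddv_pi_id ?(subvP AU).
Qed.

Lemma limg_daddv_pi_eq0 B : (B <= V)%VS -> (pi @: B = 0)%VS.
Proof.
move=> BV; apply/eqP; rewrite -subv0; apply/subvP => _ /memv_imgP[b bB ->].
by rewrite daddv_pi_eq0 ?mem0v ?(subvP BV).
Qed.

Lemma limg_daddv_pi_addv_l A B : (A <= U)%VS -> (B <= V)%VS -> (pi @: (A + B) = A)%VS.
Proof. by move=> AU BV; rewrite limgD limg_daddv_pi_id // limg_daddv_pi_eq0 // addv0. Qed.

Lemma limg_daddv_pi_addv_r A B : (A <= V)%VS -> (B <= U)%VS -> (pi @: (A + B) = B)%VS.
Proof. by move=> AV BU; rewrite addvC limg_daddv_pi_addv_l. Qed.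

Lemma limg_daddv_pi_addv_line A B y : (A <= U)%VS -> (B <= V)%VS ->
  (pi @: (A + B + <[y]>) = A + <[pi y]>)%VS.
Proof. by move=> AU BV; rewrite limgD limg_daddv_pi_addv_l // limg_line. Qed.

Lemma subv_limg_daddv_pi X : (X <= U + V)%VS -> (X <= pi @: X + daddv_pi V U @: X)%VS.
Proof.
move=> XUV; apply/subvP => x xX.
by rewrite -(daddv_pi_add dUV (subvP XUV x xX)) memv_add ?memv_img.
Qed.

End Projections.

Section QMatroidRank.
Variables (F : finFieldType) (vT : vectType F).
Variables (E : {vspace vT}) (rho : {vspace vT} -> nat).
Hypothesis hM : is_qmatroid E rho.
Implicit Types (A P V W Y Z Fl : {vspace vT}) (x y : vT).

Lemma rank_leq_dim V : (V <= E)%VS -> rho V <= \dim V.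
Proof. by case: hM => h _; apply: h. Qed.

Lemma rank_monotone V W : (V <= W)%VS -> (W <= E)%VS -> rho V <= rho W.
Proof. by case: hM => _ [h _] VW WE; apply: h => //; apply: subv_trans WE. Qed.

Lemma rank_submod V W : (V <= E)%VS -> (W <= E)%VS ->
  rho (V + W)%VS + rho (V :&: W)%VS <= rho V + rho W.
Proof. by case: hM => _ [_ h]; apply: h. Qed.

Lemma rank0 : rho 0%VS = 0.
Proof. by have := rank_leq_dim (sub0v E); rewrite dimv0 leqn0 => /eqP. Qed.

Lemma rank_addv_leq V W : (V <= E)%VS -> (W <= E)%VS -> rho (V + W)%VS <= rho V + rho W.
Proof. by move=> VE WE; apply: leq_trans (rank_submod VE WE); apply: leq_addr. Qed.

Lemma nullity_monotone V W : (V <= W)%VS -> (W <= E)%VS -> rho W + \dim V <= rho V + \dim W.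
Proof.
move=> VW WE; set C := (W :\: V)%VS.
have CE : (C <= E)%VS := subv_trans (diffvSl W V) WE.
have eW : (C + V = W)%VS by rewrite addv_diff (addv_idPl VW).
have := rank_submod CE (subv_trans VW WE); rewrite eW capv_diff rank0 addn0.
have dW : \dim W = \dim C + \dim V by rewrite -eW dimv_disjoint_sum // capv_diff.
have := rank_leq_dim CE; lia.
Qed.

Lemma rank_addv_line_leq V x : (V <= E)%VS -> x \in E -> rho (V + <[x]>)%VS <= (rho V).+1.
Proof.
move=> VE xE; have VxE : (V + <[x]> <= E)%VS by rewrite subv_add VE -memvE.
have := nullity_monotone (addvSl V <[x]>) VxE; have := dimv_add_line_leq V x; lia.
Qed.

Lemma cyclic_nullity_gap Y P : (Y <= E)%VS -> qcyclic rho Y -> (P <= Y)%VS ->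
  rho Y + \dim P + (P != Y) <= rho P + \dim Y.
Proof.
move=> YE cY PY; have [->|PnY] := eqVneq P Y; first by rewrite addn0.
have [x [W [xY PW eY dW]]] := exists_hyperplane PY PnY.
have WY : (W <= Y)%VS by rewrite -eY addvSl.
have [_ /(_ W WY eY) rW] := cY x xY.
have := nullity_monotone PW (subv_trans WY YE); lia.
Qed.

Lemma nullity_line_ext_leq A P z : (A <= E)%VS -> (P <= E)%VS -> (P <= A + <[z]>)%VS ->
  (forall p, p \in P -> p \notin A -> rho A < rho (A + <[p]>)%VS) ->
  rho A + \dim P <= rho P + \dim A.
Proof.
move=> AE PE PAz hA; have [PA|/subvPn[p pP pA]] := boolP (P <= A)%VS.
  have := nullity_monotone PA AE; have := rank_monotone PA AE; have := dimvS PA; lia.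
have APE : (A + P <= E)%VS by rewrite subv_add AE PE.
have ApAP : (A + <[p]> <= A + P)%VS by rewrite addvS // -memvE.
have APAz : (A + P <= A + <[z]>)%VS by rewrite subv_add addvSl PAz.
have := rank_monotone ApAP APE; have := nullity_monotone (addvSr A P) APE.
have := dimvS APAz; have := dimv_add_line_leq A z; have := hA p pP pA; lia.
Qed.

Lemma flat_hull V : (V <= E)%VS ->
  exists Fl, [/\ (V <= Fl)%VS, qflat E rho Fl & rho Fl = rho V].
Proof.
have [n] := ubnP (\dim E - \dim V); elim: n V => // n IHn V ltVn VE.
have [fV|nfV] := classic (qflat E rho V); first by exists V.
have [x [xE xV rVx]] : exists x, [/\ x \in E, x \notin V & rho (V + <[x]>)%VS <= rho V].
  apply: NNPP => hn; apply: nfV; split => // x xE xV; rewrite ltnNge.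
  by apply/negP => rVx; apply: hn; exists x.
have VxE : (V + <[x]> <= E)%VS by rewrite subv_add VE -memvE.
have [|Fl [VxFl fFl rFl]] := IHn _ _ VxE.
  by have := dimv_add_line xV; have := dimvS VxE; lia.
exists Fl; split => //; first exact: subv_trans (addvSl _ _) VxFl.
by apply/eqP; rewrite rFl eqn_leq rVx rank_monotone ?addvSl.
Qed.

Lemma flat_hyperplane Fl W x : qflat E rho Fl -> (W <= Fl)%VS -> (W + <[x]> = Fl)%VS ->
  rho W < rho Fl -> qflat E rho W.
Proof.
move=> [FlE fFl] WFl eFl rW; have WE := subv_trans WFl FlE.
have xW : x \notin W.
  by apply: contraTN rW; rewrite memvE => /addv_idPl eW; rewrite -eFl eW ltnn.
split => // y yE yW; have [yFl|yFl] := boolP (y \in Fl).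
  suff -> : (W + <[y]> = Fl)%VS by [].
  by apply/eqP; rewrite eqEdim subv_add WFl -memvE yFl -eFl !dimv_add_line // ltnSn.
have WyE : (W + <[y]> <= E)%VS by rewrite subv_add WE -memvE.
have := rank_submod WyE FlE; rewrite -addvA (addvC _ Fl) addvA (addv_idPr WFl).
have WcapFl : (W <= (W + <[y]>) :&: Fl)%VS by rewrite subv_cap addvSl WFl.
have := rank_monotone WcapFl (subv_trans (capvSr _ _) FlE).
have := fFl y yE yFl; lia.
Qed.

Lemma cyclic_flat_in_flat Fl : qflat E rho Fl ->
  exists Z, [/\ cyclic_flat E rho Z, (Z <= Fl)%VS & rho Z + \dim Fl <= rho Fl + \dim Z].
Proof.
have [n] := ubnP (\dim Fl); elim: n Fl => // n IHn Fl ltFln fFl.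
have [cFl|ncFl] := classic (qcyclic rho Fl); first by exists Fl.
have FlE : (Fl <= E)%VS by case: fFl.
have [x [W [xFl WFl eFl rW]]] : exists x W, [/\ x \in Fl, (W <= Fl)%VS,
    (W + <[x]> = Fl)%VS & rho W <> rho Fl].
  apply: NNPP => hn; apply: ncFl => x xFl; split => // W WFl eFl.
  by apply: NNPP => rW; apply: hn; exists x, W.
have xW : x \notin W.
  by apply/negP; rewrite memvE => /addv_idPl eW; apply: rW; rewrite -eFl eW.
have dFl : \dim Fl = (\dim W).+1 by rewrite -eFl dimv_add_line.
have rWFl : rho W < rho Fl by have := rank_monotone WFl FlE; lia.
have rFlW : rho Fl <= (rho W).+1.
  by rewrite -eFl rank_addv_line_leq ?(subv_trans WFl FlE) ?(subvP FlE).
have [|Z [cZ ZW hZ]] := IHn W _ (flat_hyperplane fFl WFl eFl rWFl); first lia.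
by exists Z; split => //; [exact: subv_trans WFl | lia].
Qed.

Lemma rank_via_cyclic_flat V : (V <= E)%VS ->
  exists2 Z, cyclic_flat E rho Z & rho Z + \dim (V + Z) <= rho V + \dim Z.
Proof.
move=> VE; have [Fl [VFl fFl rFl]] := flat_hull VE.
have [Z [cZ ZFl hZ]] := cyclic_flat_in_flat fFl.
have VZFl : (V + Z <= Fl)%VS by rewrite subv_add VFl ZFl.
by exists Z => //; have := dimvS VZFl; lia.
Qed.

End QMatroidRank.

Definition cyclic_flat_decomposition (F : finFieldType) (vT : vectType F)
    (E : {vspace vT}) (rho : {vspace vT} -> nat) (Z1 Z2 : {vspace vT}) : Prop :=
  Z1 != 0%VS /\ Z2 != 0%VS /\
  cyclic_flat E rho Z1 /\ cyclic_flat E rho Z2 /\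
  (Z1 + Z2)%VS = E /\ (Z1 :&: Z2)%VS = 0%VS /\
  (rho Z1 + rho Z2 = rho E)%N /\
  (forall Z : {vspace vT},
     cyclic_flat E rho Z <->
     exists Y1 Y2 : {vspace vT},
       [/\ cyclic_flat E rho Y1, (Y1 <= Z1)%VS,
           cyclic_flat E rho Y2, (Y2 <= Z2)%VS &
           Z = (Y1 + Y2)%VS]).

(* With rho itself as the rank of both summands, this is the half of the direct-sum rank
   formula that can fail; the other half always holds (rank_leq_split_rank). *)
Definition rank_splits (F : finFieldType) (vT : vectType F)
    (E : {vspace vT}) (rho : {vspace vT} -> nat) (E1 E2 : {vspace vT}) : Prop :=
  forall V, (V <= E)%VS -> exists2 X, (X <= V)%VS &
    \dim V + rho (daddv_pi E1 E2 @: X)%VS + rho (daddv_pi E2 E1 @: X)%VS <= rho V + \dim X.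

Section Reducibility.
Variables (F : finFieldType) (vT : vectType F).
Variables (E : {vspace vT}) (rho : {vspace vT} -> nat).
Hypothesis hM : is_qmatroid E rho.
Implicit Types (A B V W X Y Z : {vspace vT}) (x : vT).

Lemma qmatroid_restrict E1 : (E1 <= E)%VS -> is_qmatroid E1 rho.
Proof.
move=> E1E; split; [|split].
- by move=> V VE1; exact: (rank_leq_dim hM (subv_trans VE1 E1E)).
- by move=> V W _ WE1 VW; exact: (rank_monotone hM VW (subv_trans WE1 E1E)).
- by move=> V W VE1 WE1; exact: (rank_submod hM (subv_trans VE1 E1E) (subv_trans WE1 E1E)).
Qed.

Section Split.
Variables E1 E2 : {vspace vT}.
Hypotheses (sumE : (E1 + E2 = E)%VS) (dE12 : (E1 :&: E2 = 0)%VS).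
Local Notation pi1 := (daddv_pi E1 E2).
Local Notation pi2 := (daddv_pi E2 E1).

Lemma rank_leq_split_rank V X : (V <= E)%VS -> (X <= V)%VS ->
  rho V + \dim X <= \dim V + rho (pi1 @: X)%VS + rho (pi2 @: X)%VS.
Proof.
move=> VE XV; have XE := subv_trans XV VE.
have P1E : (pi1 @: X <= E)%VS by rewrite -sumE (subv_trans (limg_daddv_pi_sub _ _ _)) ?addvSl.
have P2E : (pi2 @: X <= E)%VS by rewrite -sumE (subv_trans (limg_daddv_pi_sub _ _ _)) ?addvSr.
have XP : (X <= pi1 @: X + pi2 @: X)%VS by apply: subv_limg_daddv_pi; rewrite // sumE.
have := rank_monotone hM XP; rewrite subv_add P1E P2E => /(_ isT).
have := rank_addv_leq hM P1E P2E; have := nullity_monotone hM XV VE; lia.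
Qed.

Lemma qreducible_of_split : E1 != 0%VS -> E2 != 0%VS -> rank_splits E rho E1 E2 ->
  qreducible E rho.
Proof.
move=> nzE1 nzE2 hX; exists E1, E2, rho, rho.
do 2 split => //; split; first by apply: qmatroid_restrict; rewrite -sumE addvSl.
split; first by apply: qmatroid_restrict; rewrite -sumE addvSr.
do 2 split => //; cbv zeta => V VE; split => [|X XV].
  have [X XV hX'] := hX V VE; exists X => //.
  have := rank_leq_split_rank VE XV; lia.
have := rank_leq_split_rank VE XV; lia.
Qed.

Lemma rank_splits_sym : rank_splits E rho E1 E2 -> rank_splits E rho E2 E1.
Proof. by move=> hX V /hX[X XV hXV]; exists X; rewrite // addnAC. Qed.

Lemma rank_addv_of_split A B : rank_splits E rho E1 E2 -> (A <= E1)%VS -> (B <= E2)%VS ->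
  rho (A + B)%VS = rho A + rho B.
Proof.
move=> hX AE1 BE2; have AE : (A <= E)%VS by rewrite -sumE (subv_trans AE1) ?addvSl.
have BE : (B <= E)%VS by rewrite -sumE (subv_trans BE2) ?addvSr.
apply/eqP; rewrite eqn_leq (rank_addv_leq hM AE BE) /=.
have ABE : (A + B <= E)%VS by rewrite subv_add AE BE.
have [X XAB hXAB] := hX _ ABE.
have dAB : (A :&: B = 0)%VS by apply/eqP; rewrite -subv0 -dE12 capvS.
have XE12 : (X <= E1 + E2)%VS by rewrite sumE (subv_trans XAB).
have PA : (pi1 @: X <= A)%VS.
  by rewrite -(limg_daddv_pi_addv_l dE12 AE1 BE2) limgS.
have QB : (pi2 @: X <= B)%VS.
  have dE21 : (E2 :&: E1 = 0)%VS by rewrite capvC.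
  by rewrite -(limg_daddv_pi_addv_r dE21 AE1 BE2) limgS.
have := leq_of_leqif (dimv_add_leqif (pi1 @: X) (pi2 @: X)); have := dimvS (subv_limg_daddv_pi dE12 XE12).
have := nullity_monotone hM PA AE; have := nullity_monotone hM QB BE.
rewrite dimv_disjoint_sum // in hXAB; lia.
Qed.

End Split.

Lemma rank_superadditive_split Z1 Z2 A B : (Z1 + Z2 = E)%VS -> (Z1 :&: Z2 = 0)%VS ->
  rho Z1 + rho Z2 = rho E -> (A <= Z1)%VS -> (B <= Z2)%VS ->
  rho A + rho B <= rho (A + B)%VS.
Proof.
move=> sumE dZ rZ AZ1 BZ2.
have Z1E : (Z1 <= E)%VS by rewrite -sumE addvSl.
have Z2E : (Z2 <= E)%VS by rewrite -sumE addvSr.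
have [AE BE] := (subv_trans AZ1 Z1E, subv_trans BZ2 Z2E).
have AZ2E : (A + Z2 <= E)%VS by rewrite subv_add AE Z2E.
have ABE : (A + B <= E)%VS by rewrite subv_add AE BE.
have := rank_submod hM AZ2E Z1E.
rewrite -addvA (addvC Z2) sumE (addv_idPr AE).
rewrite capv_addv_modular // capvC dZ addv0.
have capB : ((A + B) :&: Z2 = B)%VS.
  rewrite addvC capv_addv_modular //.
  have /eqP -> : (A :&: Z2 == 0)%VS by rewrite -subv0 -dZ capvS.
  exact: addv0.
have := rank_submod hM ABE Z2E; rewrite -addvA (addv_idPr BZ2) capB; lia.
Qed.

Lemma qreducible_of_cyclic_flat_decomposition Z1 Z2 :
  cyclic_flat_decomposition E rho Z1 Z2 -> qreducible E rho.
Proof.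
move=> [nzZ1 [nzZ2 [_ [_ [sumE [dZ [rZ hZ]]]]]]].
apply: (qreducible_of_split sumE dZ nzZ1 nzZ2) => V VE.
have [Z cZ rVZ] := rank_via_cyclic_flat hM VE.
have [Y1 [Y2 [_ Y1Z1 _ Y2Z2 eZ]]] := (hZ Z).1 cZ.
exists (V :&: Z)%VS; first exact: capvSl.
have dZ21 : (Z2 :&: Z1 = 0)%VS by rewrite capvC.
have VZY : (V :&: Z <= Y1 + Y2)%VS by rewrite -eZ capvSr.
have P1 : (daddv_pi Z1 Z2 @: (V :&: Z) <= Y1)%VS.
  by rewrite -(limg_daddv_pi_addv_l dZ Y1Z1 Y2Z2) limgS.
have P2 : (daddv_pi Z2 Z1 @: (V :&: Z) <= Y2)%VS.
  by rewrite -(limg_daddv_pi_addv_r dZ21 Y1Z1 Y2Z2) limgS.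
have Z1E : (Z1 <= E)%VS by rewrite -sumE addvSl.
have Z2E : (Z2 <= E)%VS by rewrite -sumE addvSr.
have := rank_monotone hM P1 (subv_trans Y1Z1 Z1E).
have := rank_monotone hM P2 (subv_trans Y2Z2 Z2E).
have := rank_superadditive_split sumE dZ rZ Y1Z1 Y2Z2; rewrite -eZ.
have := dimv_sum_cap V Z; lia.
Qed.

Lemma rank_line_gt0 x : qcl E rho 0%VS = 0%VS -> x \in E -> x != 0%R -> 0 < rho <[x]>%VS.
Proof.
move=> cl0 xE x0; rewrite lt0n; apply/negP => /eqP rx.
have : (<[x]> <= qcl E rho 0%VS)%VS.
  by apply: (sumv_sup (x : finvect_type vT)); rewrite // add0v rx (rank0 hM) xE eqxx.
by rewrite cl0 subv0 -dimv_eq0 dim_vline x0.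
Qed.

Hypothesis dimE : 2 <= \dim E.

Lemma hyperplane_neq0 W x : (W + <[x]> = E)%VS -> W != 0%VS.
Proof.
move=> sumE; apply: contraTneq dimE => W0.
by rewrite -sumE W0 add0v dim_vline; case: (x != 0%R).
Qed.

Lemma qreducible_loop x : x \in E -> x != 0%R -> rho <[x]>%VS = 0 -> qreducible E rho.
Proof.
move=> xE x0 rx; have xE' : (<[x]> <= E)%VS by rewrite -memvE.
set H := (E :\: <[x]>)%VS.
have sumE : (H + <[x]> = E)%VS by rewrite addv_diff (addv_idPl xE').
apply: (qreducible_of_split sumE (capv_diff _ _) (hyperplane_neq0 sumE)).
  by rewrite -dimv_eq0 dim_vline x0.
move=> V VE; exists V => //.
have P2 : (daddv_pi <[x]> H @: V <= <[x]>)%VS by apply: limg_daddv_pi_sub.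
have P1 : (daddv_pi H <[x]> @: V <= V + <[x]>)%VS.
  apply/subvP => _ /memv_imgP[v vV ->].
  have vHx : v \in (H + <[x]>)%VS by rewrite sumE (subvP VE).
  rewrite (canRL (addrK _) (daddv_pi_add (capv_diff E <[x]>) vHx)).
  by rewrite memv_add // memvN memv_pi.
have VxE : (V + <[x]> <= E)%VS by rewrite subv_add VE xE'.
have := rank_monotone hM P1 VxE; have := rank_monotone hM P2 xE'.
have := rank_addv_leq hM VE xE'; lia.
Qed.

Lemma qreducible_coloop x W : (W <= E)%VS -> (W + <[x]> = E)%VS -> rho W <> rho E ->
  qreducible E rho.
Proof.
move=> WE sumE rW.
have xW : x \notin W.
  by apply/negP; rewrite memvE => /addv_idPl eW; apply: rW; rewrite -sumE eW.
have x0 : x != 0%R by apply: contraNneq xW => ->; rewrite mem0v.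
have dE : \dim E = (\dim W).+1 by rewrite -sumE dimv_add_line.
have rE : rho E = (rho W).+1.
  have xE : x \in E by rewrite -sumE memvE addvSr.
  have := rank_addv_line_leq hM WE xE; rewrite sumE.
  have := rank_monotone hM WE (subvv E); lia.
apply: (qreducible_of_split sumE (capv_line_eq0 xW) (hyperplane_neq0 sumE)).
  by rewrite -dimv_eq0 dim_vline x0.
move=> V VE; exists (V :&: W)%VS; first exact: capvSl.
have [XW XE] : (V :&: W <= W)%VS /\ (V :&: W <= E)%VS.
  by split; [exact: capvSr | exact: subv_trans (capvSr _ _) WE].
have dxW : (<[x]> :&: W = 0)%VS by rewrite capvC capv_line_eq0.
rewrite (limg_daddv_pi_id (capv_line_eq0 xW) XW) (limg_daddv_pi_eq0 dxW XW) (rank0 hM) addn0.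
have [VW|VW] := boolP (V <= W)%VS; first by rewrite (capv_idPl VW) addnC.
have eVW : (V + W = E)%VS.
  have ltW : \dim W < \dim (V + W).
    rewrite ltn_neqAle dimvS ?addvSr // andbT; apply: contra VW => /eqP dW.
    have /eqP -> : (W == V + W)%VS by rewrite eqEdim addvSr -dW leqnn.
    exact: addvSl.
  by apply/eqP; rewrite eqEdim subv_add VE WE dE.
have := rank_submod hM VE WE; have := dimv_sum_cap V W; rewrite eVW; lia.
Qed.

Lemma qfull_of_qirreducible : qirreducible E rho -> qfull E rho.
Proof.
move=> irr; split => [|x xE]; last first.
  split => // W WE sumE; apply: NNPP => rW.
  exact: irr (qreducible_coloop WE sumE rW).
apply/eqP; rewrite -subv0; apply/subv_sumP => x /andP[xE /eqP rx].
have [->|x0] := eqVneq (x : vT) 0%R; first exact: subvv.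
by case: irr; apply: (qreducible_loop xE x0); rewrite -(rank0 hM) -rx add0v.
Qed.

End Reducibility.

Section DirectSum.
Variables (F : finFieldType) (vT : vectType F).
Variables (E E1 E2 : {vspace vT}) (rho r1 r2 : {vspace vT} -> nat).
Hypotheses (hM1 : is_qmatroid E1 r1) (hM2 : is_qmatroid E2 r2).
Hypothesis hsum : is_direct_sum E rho E1 r1 E2 r2.
Implicit Types (A B V X : {vspace vT}).

Local Notation pi1 := (daddv_pi E1 E2).
Local Notation pi2 := (daddv_pi E2 E1).

Lemma direct_sum_rank_addv A B : (A <= E1)%VS -> (B <= E2)%VS ->
  rho (A + B)%VS = r1 A + r2 B.
Proof.
case: hsum => sumE [dE12 hrho] AE1 BE2; cbv zeta in hrho.
have dE21 : (E2 :&: E1 = 0)%VS by rewrite capvC.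
have ABE : (A + B <= E)%VS by rewrite -sumE addvS.
have [[X XAB eX] /(_ _ (subvv _))] := hrho _ ABE.
rewrite (limg_daddv_pi_addv_l dE12 AE1 BE2) (limg_daddv_pi_addv_r dE21 AE1 BE2) => leAB.
have PA : (pi1 @: X <= A)%VS by rewrite -(limg_daddv_pi_addv_l dE12 AE1 BE2) limgS.
have QB : (pi2 @: X <= B)%VS by rewrite -(limg_daddv_pi_addv_r dE21 AE1 BE2) limgS.
have XE12 : (X <= E1 + E2)%VS by rewrite (subv_trans XAB) ?addvS.
have := leq_of_leqif (dimv_add_leqif (pi1 @: X) (pi2 @: X)).
have := dimvS (subv_limg_daddv_pi dE12 XE12).
have := nullity_monotone hM1 PA AE1; have := nullity_monotone hM2 QB BE2.
have dAB : (A :&: B = 0)%VS by apply/eqP; rewrite -subv0 -dE12 capvS.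
rewrite dimv_disjoint_sum // in eX leAB; lia.
Qed.

Lemma direct_sum_rank_l A : (A <= E1)%VS -> rho A = r1 A.
Proof. by move=> AE1; rewrite -[A]addv0 direct_sum_rank_addv ?sub0v // (rank0 hM2) addn0 addv0. Qed.

Lemma direct_sum_rank_r B : (B <= E2)%VS -> rho B = r2 B.
Proof. by move=> BE2; rewrite -[B]add0v direct_sum_rank_addv ?sub0v // (rank0 hM1) add0v. Qed.

Lemma rank_splits_of_direct_sum : rank_splits E rho E1 E2.
Proof.
case: hsum => _ [_ hrho] V VE; have [[X XV eX] _] := hrho V VE; exists X => //.
rewrite direct_sum_rank_l ?limg_daddv_pi_sub // direct_sum_rank_r ?limg_daddv_pi_sub //; lia.
Qed.

End DirectSum.

Lemma split_of_qreducible (F : finFieldType) (vT : vectType F)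
    (E : {vspace vT}) (rho : {vspace vT} -> nat) :
  qreducible E rho -> exists E1 E2 : {vspace vT},
    [/\ E1 != 0%VS, E2 != 0%VS, (E1 + E2 = E)%VS, (E1 :&: E2 = 0)%VS & rank_splits E rho E1 E2].
Proof.
move=> [E1 [E2 [r1 [r2 [nzE1 [nzE2 [hM1 [hM2 hsum]]]]]]]].
exists E1, E2; split => //; try by case: hsum => [? []].
exact: rank_splits_of_direct_sum hM1 hM2 hsum.
Qed.

Section SplitQMatroid.
Variables (F : finFieldType) (vT : vectType F).
Variables (E : {vspace vT}) (rho : {vspace vT} -> nat).
Hypothesis hM : is_qmatroid E rho.
Variables E1 E2 : {vspace vT}.
Hypotheses (sumE : (E1 + E2 = E)%VS) (dE12 : (E1 :&: E2 = 0)%VS).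
Hypothesis hsplit : rank_splits E rho E1 E2.
Implicit Types (A B W X Y Z : {vspace vT}) (x y z : vT).

Local Notation pi1 := (daddv_pi E1 E2).
Local Notation pi2 := (daddv_pi E2 E1).

Let dE21 : (E2 :&: E1 = 0)%VS. Proof. by rewrite capvC. Qed.
Let E1E : (E1 <= E)%VS. Proof. by rewrite -sumE addvSl. Qed.
Let E2E : (E2 <= E)%VS. Proof. by rewrite -sumE addvSr. Qed.
Let rank_add A B : (A <= E1)%VS -> (B <= E2)%VS -> rho (A + B)%VS = rho A + rho B.
Proof. exact: (rank_addv_of_split hM sumE dE12 hsplit). Qed.

Let dim_split X : (X <= E)%VS -> \dim X <= \dim (pi1 @: X) + \dim (pi2 @: X).
Proof.
move=> XE; apply: leq_trans (leq_of_leqif (dimv_add_leqif _ _)).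
by rewrite dimvS // subv_limg_daddv_pi // sumE.
Qed.

Let dimv_addv_split A B : (A <= E1)%VS -> (B <= E2)%VS -> \dim (A + B) = \dim A + \dim B.
Proof. by move=> AE1 BE2; rewrite dimv_disjoint_sum //; apply/eqP; rewrite -subv0 -dE12 capvS. Qed.

Lemma qflat_addv A B : (A <= E1)%VS -> (B <= E2)%VS ->
  (forall z, z \in E1 -> z \notin A -> rho A < rho (A + <[z]>)%VS) ->
  (forall z, z \in E2 -> z \notin B -> rho B < rho (B + <[z]>)%VS) ->
  qflat E rho (A + B).
Proof.
move=> AE1 BE2 flatA flatB; have [AE BE] := (subv_trans AE1 E1E, subv_trans BE2 E2E).
have ABE : (A + B <= E)%VS by rewrite subv_add AE BE.
split => // y yE yAB; have VE : (A + B + <[y]> <= E)%VS by rewrite subv_add ABE -memvE.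
have [X XV hX] := hsplit VE.
have P1 : (pi1 @: X <= A + <[pi1 y]>)%VS.
  by rewrite -(limg_daddv_pi_addv_line dE12 _ AE1 BE2) limgS.
have P2 : (pi2 @: X <= B + <[pi2 y]>)%VS.
  by rewrite -(limg_daddv_pi_addv_line dE21 _ BE2 AE1) (addvC B) limgS.
have [P1E P2E] : (pi1 @: X <= E1)%VS /\ (pi2 @: X <= E2)%VS by split; apply: limg_daddv_pi_sub.
have := nullity_line_ext_leq hM AE (subv_trans P1E E1E) P1 (fun p pP => flatA p (subvP P1E p pP)).
have := nullity_line_ext_leq hM BE (subv_trans P2E E2E) P2 (fun p pP => flatB p (subvP P2E p pP)).
have := dim_split (subv_trans XV VE); have := dimv_add_line yAB.
have := dimv_addv_split AE1 BE2; rewrite (rank_add AE1 BE2); rank_lia.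
Qed.

Lemma qcyclic_summand A B : (A <= E1)%VS -> (B <= E2)%VS -> qcyclic rho (A + B) ->
  qcyclic rho A.
Proof.
move=> AE1 BE2 cAB x xA; split => // W WA eA.
have [_ /(_ (W + B)%VS)] := cAB x (subvP (addvSl A B) x xA).
by rewrite addvS // -addvA (addvC B) addvA eA !rank_add ?(subv_trans WA) // => /(_ isT erefl)/addIn.
Qed.

Lemma qcyclic_addv Y1 Y2 : (Y1 <= E1)%VS -> (Y2 <= E2)%VS -> qcyclic rho Y1 -> qcyclic rho Y2 ->
  qcyclic rho (Y1 + Y2).
Proof.
move=> Y1E1 Y2E2 cY1 cY2 x xY; split => // W WY eY.
have [Y1E Y2E] := (subv_trans Y1E1 E1E, subv_trans Y2E2 E2E).
have YE : (Y1 + Y2 <= E)%VS by rewrite subv_add Y1E Y2E.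
have [X XW hX] := hsplit (subv_trans WY YE).
have XY := subv_trans XW WY.
have P1 : (pi1 @: X <= Y1)%VS by rewrite -(limg_daddv_pi_addv_l dE12 Y1E1 Y2E2) limgS.
have P2 : (pi2 @: X <= Y2)%VS by rewrite -(limg_daddv_pi_addv_r dE21 Y1E1 Y2E2) limgS.
have gap1 := cyclic_nullity_gap hM Y1E cY1 P1; have gap2 := cyclic_nullity_gap hM Y2E cY2 P2.
have := dim_split (subv_trans XY YE); have := dimvS P1; have := dimvS P2.
have := dimv_add_line_leq W x; rewrite eY.
have := rank_monotone hM WY YE; have := dimvS XW.
rewrite rank_add // dimv_addv_split //.
move: hX gap1 gap2.
have [->|nP1] := eqVneq (pi1 @: X)%VS Y1; have [->|nP2] := eqVneq (pi2 @: X)%VS Y2;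
  rewrite ?eqxx ?nP1 ?nP2 /=; rank_lia.
Qed.

Lemma addv_limg_daddv_pi_cyclic_flat Z : cyclic_flat E rho Z -> (pi1 @: Z + pi2 @: Z = Z)%VS.
Proof.
move=> [[ZE flatZ] cZ].
have [P1E P2E] : (pi1 @: Z <= E1)%VS /\ (pi2 @: Z <= E2)%VS by split; apply: limg_daddv_pi_sub.
have PQE : (pi1 @: Z + pi2 @: Z <= E)%VS by rewrite -sumE addvS.
have ZPQ : (Z <= pi1 @: Z + pi2 @: Z)%VS by apply: (subv_limg_daddv_pi dE12); rewrite sumE.
have [X XZ hX] := hsplit ZE.
have eXZ : X = Z.
  have XE := subv_trans XZ ZE.
  have XPQ : (X <= pi1 @: X + pi2 @: X)%VS by apply: (subv_limg_daddv_pi dE12); rewrite sumE.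
  have [Q1E Q2E] : (pi1 @: X <= E)%VS /\ (pi2 @: X <= E)%VS.
    by split; apply: subv_trans (limg_daddv_pi_sub _ _ _) _.
  have := rank_monotone hM XPQ; rewrite subv_add Q1E Q2E => /(_ isT).
  have := rank_addv_leq hM Q1E Q2E; have := cyclic_nullity_gap hM ZE cZ XZ.
  by case: eqP => // nXZ; rank_lia.
have PQZ : (pi1 @: Z + pi2 @: Z <= Z)%VS.
  apply/subvP => s sPQ; apply/negPn/negP => sZ.
  have ZsPQ : (Z + <[s]> <= pi1 @: Z + pi2 @: Z)%VS by rewrite subv_add ZPQ -memvE.
  have := flatZ s (subvP PQE s sPQ) sZ; have := rank_monotone hM ZsPQ PQE.
  by rewrite (rank_add P1E P2E); rewrite eXZ in hX; rank_lia.
by apply/eqP; rewrite eqEsubv PQZ ZPQ.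
Qed.

Lemma cyclic_flat_addv Y1 Y2 : (Y1 <= E1)%VS -> (Y2 <= E2)%VS ->
  cyclic_flat E rho Y1 -> cyclic_flat E rho Y2 -> cyclic_flat E rho (Y1 + Y2).
Proof.
move=> Y1E1 Y2E2 [[_ flatY1] cY1] [[_ flatY2] cY2]; split; last exact: qcyclic_addv.
apply: qflat_addv => // z zEi zY; [apply: flatY1 | apply: flatY2] => //.
  exact: subvP E1E z zEi.
exact: subvP E2E z zEi.
Qed.

Hypothesis cl0 : qcl E rho 0%VS = 0%VS.

Lemma cyclic_flat_summand A B : (A <= E1)%VS -> (B <= E2)%VS ->
  cyclic_flat E rho (A + B) -> cyclic_flat E rho A.
Proof.
move=> AE1 BE2 [[_ flatAB] cAB]; split; last exact: qcyclic_summand cAB.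
rewrite -[A]addv0; apply: qflat_addv => //; first exact: sub0v.
  move=> z zE1 zA.
  have zAB : z \notin (A + B)%VS.
    apply: contra zA => zAB; rewrite -(daddv_pi_id dE12 zE1).
    by rewrite -(limg_daddv_pi_addv_l dE12 AE1 BE2) memv_img.
  have AzE1 : (A + <[z]> <= E1)%VS by rewrite subv_add AE1 -memvE.
  have := flatAB z (subvP E1E z zE1) zAB.
  by rewrite -addvA (addvC B) addvA (rank_add AE1 BE2) (rank_add AzE1 BE2) ltn_add2r.
move=> z zE2; rewrite memv0 add0v (rank0 hM) => z0.
exact: (rank_line_gt0 hM cl0 (subvP E2E z zE2) z0).
Qed.

End SplitQMatroid.

Lemma cyclic_flat_decomposition_of_qreducible (F : finFieldType) (vT : vectType F)
    (E : {vspace vT}) (rho : {vspace vT} -> nat) :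
  is_qmatroid E rho -> qfull E rho -> qreducible E rho ->
  exists Z1 Z2, cyclic_flat_decomposition E rho Z1 Z2.
Proof.
move=> hM [cl0 cE] /split_of_qreducible[E1 [E2 [nzE1 nzE2 sumE dE12 hsplit]]].
have sumE' : (E2 + E1 = E)%VS by rewrite addvC.
have dE21 : (E2 :&: E1 = 0)%VS by rewrite capvC.
have summand1 := cyclic_flat_summand hM sumE dE12 hsplit cl0.
have summand2 := cyclic_flat_summand hM sumE' dE21 (rank_splits_sym hsplit) cl0.
have cfE : cyclic_flat E rho E by split=> //; split=> // x ->.
exists E1, E2; do 2 split => //.
split; first by apply: (summand1 _ E2) => //; rewrite sumE.
split; first by apply: (summand2 _ E1) => //; rewrite sumE'.
do 2 split => //; split; first by rewrite -(rank_addv_of_split hM sumE dE12 hsplit) ?sumE.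
move=> Z; split => [cZ|[Y1 [Y2 [cY1 Y1E1 cY2 Y2E2 ->]]]]; last first.
  exact: (cyclic_flat_addv hM sumE dE12 hsplit).
have eZ := addv_limg_daddv_pi_cyclic_flat hM sumE dE12 hsplit cZ.
exists (daddv_pi E1 E2 @: Z)%VS, (daddv_pi E2 E1 @: Z)%VS; split.
- by apply: (summand1 _ (daddv_pi E2 E1 @: Z)%VS); rewrite ?limg_daddv_pi_sub ?eZ.
- exact: limg_daddv_pi_sub.
- by apply: (summand2 _ (daddv_pi E1 E2 @: Z)%VS); rewrite ?limg_daddv_pi_sub // addvC eZ.
- exact: limg_daddv_pi_sub.
- by rewrite eZ.
Qed.

Unset Implicit Arguments.

Theorem theorem7p13 (F : finFieldType) (vT : vectType F)
    (E : {vspace vT}) (rho : {vspace vT} -> nat)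
    (hM : is_qmatroid E rho) (hdim : (2 <= \dim E)%N) :
  qirreducible E rho <->
  (qfull E rho /\
   ~ (exists Z1 Z2 : {vspace vT},
        Z1 != 0%VS /\ Z2 != 0%VS /\
        cyclic_flat E rho Z1 /\ cyclic_flat E rho Z2 /\
        (Z1 + Z2)%VS = E /\ (Z1 :&: Z2)%VS = 0%VS /\
        (rho Z1 + rho Z2 = rho E)%N /\
        (forall Z : {vspace vT},
           cyclic_flat E rho Z <->
           exists Y1 Y2 : {vspace vT},
             [/\ cyclic_flat E rho Y1, (Y1 <= Z1)%VS,
                 cyclic_flat E rho Y2, (Y2 <= Z2)%VS &
                 Z = (Y1 + Y2)%VS]))).
Proof.
split => [irr | [full nodec] red].
- split; first exact: qfull_of_qirreducible hM hdim irr.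
  by move=> [Z1 [Z2 dec]]; apply: irr (qreducible_of_cyclic_flat_decomposition hM dec).
- exact: nodec (cyclic_flat_decomposition_of_qreducible hM full red).
Qed.
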